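(* Let $n\ge1$, $\mathbf{k}=(k_1,\dots,k_n)$ positive integers, $N=n+|\mathbf{k}|$, and $D\in\mathcal{D}_{\mathbf{k}}$ with rank tableau $R(D)$. If the indices $1,2,\dots,N$ of $T(D)$ are assigned ranks $r_1,r_2,\dots,r_N$ by the Ranking Algorithm, then $0=r_1\le r_2\le\cdots\le r_N$, and more precisely $r_i-r_{i-1}\in\{0,1\}$ for each $2\le i\le N$.
   Context: $|\mathbf{k}|=k_1+\cdots+k_n$. $\mathcal{D}_{\mathbf{k}}$: sequences $(a_1,\dots,a_N)$ whose positive entries are $k_1,\dots,k_n$ in order, other entries $-1$, all partial sums $a_1+\cdots+a_{i-1}\ge0$. SW-word: $S^{k_j}$ for up step $k_j$, $W$ for $-1$. Filling Algorithm producing $T(D)$: $n$ columns, column $i$ with $k_i+1$ cells in rows $1,\dots,k_i+1$; place $1$ at top of column 1; having placed $1,\dots,i-1$, the lowest filled entry of column $j$ is active if not in row $k_j+1$; if the $i$-th letter of $\texttt{SW}(D)$ is $W$ place $i$ below the smallest active entry, otherwise at the top of the leftmost empty column; continue until $1,\dots,N$ are placed. Entries of $T(D)$ are called indices. Ranking Algorithm (producing $R(D)$, same shape, each box containing the rank of the corresponding index): ranks $0,1,\dots,k_1$ to the column-1 indices top to bottom; for $i=2,\dots,n$, if the top index of column $i$ is $A+1$ and index $A$ has rank $a$, column $i$ indices get ranks $a,a+1,\dots,a+k_i$ top to bottom. *)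

From mathcomp Require Import all_boot all_order all_algebra.
Set Implicit Arguments. Unset Strict Implicit. Unset Printing Implicit Defensive.
Import Order.TTheory GRing.Theory Num.Theory.

(* k = (k_1,...,k_n) as a seq nat (0-based: k_j is nth 0 k (j-1)).
   D = (a_1,...,a_N) as a seq int.  Columns of T(D) are indexed 0..n-1
   internally (column j+1 of the paper is entry j). *)

Local Open Scope ring_scope.

Definition in_Dk (k : seq nat) (D : seq int) : Prop :=
  [/\ size D = (size k + sumn k)%N,
      [seq x <- D | 0 < x] = [seq (x%:Z) | x <- k],
      all (fun x : int => (0 < x) || (x == -1)) D
    & forall i : nat, (1 <= i <= size D)%N -> 0 <= \sum_(x <- take i.-1 D) x].

Local Close Scope ring_scope.

Inductive letter := S | W.
Definition SW (D : seq int) : seq letter :=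
  [seq (if (x < 0)%R then W else S) | x <- D].

(* A partial filling: for each column, its entries listed top to bottom. *)
Definition col (cols : seq (seq nat)) (j : nat) : seq nat := nth [::] cols j.

Definition active (k : seq nat) (cols : seq (seq nat)) (j : nat) : bool :=
  (0 < size (col cols j)) && (size (col cols j) < (nth 0 k j).+1).

Definition lowest (cols : seq (seq nat)) (j : nat) : nat := last 0 (col cols j).

Fixpoint argmin_col (f : nat -> nat) (s : seq nat) : option nat :=
  match s with
  | [::] => None
  | j :: s' =>
      match argmin_col f s' with
      | None => Some j
      | Some j' => if f j <= f j' then Some j else Some j'
      end
  end.

Definition fill_step (k : seq nat) (cols : seq (seq nat)) (il : nat * letter)
  : seq (seq nat) :=
  let (i, l) := il in
  match l with
  | W =>
      match argmin_col (lowest cols) [seq j <- iota 0 (size k) | active k cols j] with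
      | Some j => set_nth [::] cols j (rcons (col cols j) i)
      | None => cols
      end
  | S =>
      let c := find (fun s : seq nat => nilp s) cols in
      if c < size cols then set_nth [::] cols c [:: i] else cols
  end.

(* The Filling Algorithm: T(D), as the list of its n columns (top to bottom).
   Index 1 is placed at the top of column 1 (the first letter is S). *)
Definition fillT (k : seq nat) (D : seq int) : seq (seq nat) :=
  foldl (fill_step k) (nseq (size k) [::]) (zip (iota 1 (size D)) (SW D)).

(* The Ranking Algorithm: rank of each index. Column 1 gets ranks 0..k_1;
   column i >= 2 with top index A+1 gets ranks a, a+1, ... where a = rank(A). *)
Definition rank_step (T : seq (seq nat)) (rk : nat -> nat) (c : nat) : nat -> nat :=
  let cl := col T c in
  let base := if c == 0 then 0 else rk (head 0 cl).-1 in
  fun t => if t \in cl then base + index t cl else rk t.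

Definition rank_of (T : seq (seq nat)) : nat -> nat :=
  foldl (rank_step T) (fun _ => 0) (iota 0 (size T)).

Definition rankT (k : seq nat) (D : seq int) : seq (seq nat) :=
  let T := fillT k D in [seq [seq rank_of T t | t <- cl] | cl <- T].

Definition r_ (k : seq nat) (D : seq int) (i : nat) : nat := rank_of (fillT k D) i.

From Pilot Require Import Defs.
From mathcomp Require Import all_boot all_order all_algebra.
From mathcomp Require Import zify.
(* The matrix library's [col] shadows [Defs.col]. *)
Import Defs.
Set Implicit Arguments. Unset Strict Implicit. Unset Printing Implicit Defensive.
Import Order.TTheory GRing.Theory Num.Theory.

(* After m letters the cells
   still available to a W-letter (below the lowest entry of an opened column
   that is not full) number exactly a_1 + ... + a_m >= 0, so every W finds an
   active column; and the top entry A+1 of a column other than the first is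
   placed by an S-letter whose predecessor A already sits in an earlier column.
   Hence the Ranking Algorithm is well defined and ranks increase by one down
   each column.  The invariant carried along is: for the last placed index m
   and the lowest entry e of any active column, R(e) <= R(m) <= R(e) + 1, and
   R(e) is monotone in e.  An S-letter gives m+1 the rank of m; a W-letter
   puts m+1 below the smallest active e, so R(m+1) = R(e) + 1, which is R(m)
   or R(m) + 1. *)

Lemma find_eq_nth T (a : pred T) (s : seq T) x0 i :
  i < size s -> a (nth x0 s i) -> (forall j, j < i -> ~~ a (nth x0 s j)) ->
  find a s = i.
Proof.
elim: s i => [|y s IHs] [|i] //=; first by move=> _ ->.
move=> lt_i ai before_i; rewrite (negbTE (before_i 0 isT)).
by congr _.+1; apply: IHs => // j lt_ji; apply: (before_i j.+1).
Qed.

Lemma argmin_colP f s : match argmin_col f s with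
  | None => s = [::]
  | Some j => j \in s /\ forall j', j' \in s -> f j <= f j' end.
Proof.
elim: s => [|a s IHs] //=.
case: (argmin_col f s) IHs => [j [sj minj]|->]; last by split=> [|x]; rewrite !inE // => /eqP->.
case: ifP => le_aj; split.
- by rewrite inE eqxx.
- by move=> x; rewrite inE => /orP[/eqP->//|/minj]; apply: leq_trans.
- by rewrite inE sj orbT.
- by move=> x; rewrite inE => /orP[/eqP->|/minj//]; lia.
Qed.

Definition push (cols : seq (seq nat)) j x := set_nth [::] cols j (rcons (col cols j) x).

Lemma col_push cols j x c :
  col (push cols j x) c = if c == j then rcons (col cols j) x else col cols c.
Proof. by rewrite /push /col nth_set_nth. Qed.

Lemma size_push cols j x : j < size cols -> size (push cols j x) = size cols.
Proof. by move=> lt_j; rewrite /push size_set_nth; lia. Qed.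

Lemma active_push k cols j x c : active k (push cols j x) c =
  if c == j then size (col cols j) < nth 0 k j else active k cols c.
Proof. by rewrite /active col_push; case: eqP => [->|] //; rewrite size_rcons. Qed.

Lemma lowest_push cols j x c :
  lowest (push cols j x) c = if c == j then x else lowest cols c.
Proof. by rewrite /lowest col_push; case: eqP => // _; rewrite last_rcons. Qed.

Lemma mem_lowest cols j : 0 < size (col cols j) -> lowest cols j \in col cols j.
Proof. by rewrite /lowest; case: (col cols j) => //= a s _; apply: mem_last. Qed.

Lemma fill_step_extends k cols il c : exists t, col (fill_step k cols il) c = col cols c ++ t.
Proof.
case: il => i [] /=.
  case: ifP => lt_c; last by exists [::]; rewrite cats0.
  rewrite /col nth_set_nth /=; case: eqP => [->|]; last by exists [::]; rewrite cats0.
  have /nilP -> : nilp (nth [::] cols (find (@nilp nat) cols)) by apply: nth_find; rewrite has_find.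
  by exists [:: i].
case: argmin_col => [j|]; last by exists [::]; rewrite cats0.
rewrite /col nth_set_nth /=; case: eqP => [->|]; last by exists [::]; rewrite cats0.
by exists [:: i]; rewrite cats1.
Qed.

Definition letter_of (x : int) := if (x < 0)%R then W else S.

Definition fill_prefix k D m :=
  foldl (fill_step k) (nseq (size k) [::]) (take m (zip (iota 1 (size D)) (SW D))).

Lemma fill_prefix0 k D : fill_prefix k D 0 = nseq (size k) [::].
Proof. by rewrite /fill_prefix take0. Qed.

Lemma fill_prefixS k D m : m < size D ->
  fill_prefix k D m.+1 = fill_step k (fill_prefix k D m) (m.+1, letter_of (nth 0%R D m)).
Proof.
move=> lt_m; have size_zip_D : size (zip (iota 1 (size D)) (SW D)) = size D.
  by rewrite size_zip size_iota size_map minnn.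
rewrite /fill_prefix (take_nth (0, S)) ?size_zip_D // foldl_rcons.
by rewrite nth_zip ?size_iota ?size_map // nth_iota // (nth_map 0%R).
Qed.

Lemma fill_prefix_size k D : fill_prefix k D (size D) = fillT k D.
Proof. by rewrite /fill_prefix take_oversize // size_zip size_iota size_map minnn. Qed.

Lemma foldl_fill_step_extends k cols l c :
  exists t, col (foldl (fill_step k) cols l) c = col cols c ++ t.
Proof.
elim: l cols => [|il l IHl] cols /=; first by exists [::]; rewrite cats0.
have [t ->] := IHl (fill_step k cols il).
by have [t' ->] := fill_step_extends k cols il c; rewrite -catA; eexists.
Qed.

Lemma fill_prefix_extends k D m c :
  exists t, col (fillT k D) c = col (fill_prefix k D m) c ++ t.
Proof.
by rewrite /fillT -(cat_take_drop m (zip _ _)) foldl_cat; apply: foldl_fill_step_extends.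
Qed.

Definition up_count (D : seq int) m := count (fun x : int => (0 < x)%R) (take m D).

Section DkFacts.

Variables (k : seq nat) (D : seq int).
Hypothesis Dk : in_Dk k D.

Lemma Dk_entry x : x \in D -> (0 < x)%R || (x == -1)%R.
Proof. by case: Dk => _ _ /allP all_D _; apply: all_D. Qed.

Lemma Dk_down m : m < size D -> (nth 0%R D m < 0)%R -> nth 0%R D m = (-1)%R.
Proof.
move=> lt_m neg_m; have /orP[pos_m|/eqP//] := Dk_entry (mem_nth 0%R lt_m).
by move: neg_m; rewrite ltNge ltW.
Qed.

Lemma Dk_up m : m < size D -> ~~ (nth 0%R D m < 0)%R -> (0 < nth 0%R D m)%R.
Proof. by move=> lt_m; have /orP[//|/eqP->] := Dk_entry (mem_nth 0%R lt_m). Qed.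

Lemma Dk_sum : (\sum_(x <- D) x)%R = 0%R.
Proof.
case: Dk => size_D ups_D _ _.
rewrite (bigID (fun x : int => 0 < x)%R) /= -big_filter ups_D big_map.
rewrite -(big_morph Posz PoszD (erefl _)) -sumnE.
rewrite big_seq_cond (eq_bigr (fun=> (-1)%R)); last first.
  by move=> x /andP[/Dk_entry + /negPf pos_x]; rewrite pos_x => /eqP.
rewrite -big_seq_cond big_const_seq iter_addr addr0.
have := count_predC (fun x : int => 0 < x)%R D; rewrite -size_filter ups_D size_map size_D.
by move=> /addnI <-; rewrite mulNrn natz; apply: subrr.
Qed.

Lemma Dk_prefix_sum_ge0 m : m < size D -> (0 <= \sum_(x <- take m.+1 D) x)%R.
Proof.
move=> lt_m; case: (ltnP m.+1 (size D)) => [lt_mD|le_Dm]; last by rewrite take_oversize // Dk_sum.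
by case: Dk => _ _ _ prefix_D; apply: (prefix_D m.+2); lia.
Qed.

Lemma Dk_up_entry m : m < size D -> (0 < nth 0%R D m)%R ->
  up_count D m < size k /\ nth 0%R D m = Posz (nth 0 k (up_count D m)).
Proof.
move=> lt_m pos_m; case: Dk => _ ups_D _ _.
have ups_split : [seq x <- D | (0 < x)%R] =
    [seq x <- take m D | (0 < x)%R] ++ nth 0%R D m :: [seq x <- drop m.+1 D | (0 < x)%R].
  by rewrite -{1}(cat_take_drop m D) filter_cat (drop_nth 0%R) //= pos_m.
have lt_up : up_count D m < size k.
  by rewrite -(size_map Posz) -ups_D ups_split size_cat size_filter /= addnS ltnS leq_addr.
split=> //.
by rewrite -(nth_map 0 0%R) // -ups_D ups_split nth_cat size_filter ltnn subnn.
Qed.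

End DkFacts.

Definition free_cells_col (k : seq nat) (c : nat) (s : seq nat) :=
  if 0 < size s then (nth 0 k c).+1 - size s else 0.

Definition free_cells k cols := \sum_(c < size k) free_cells_col k c (col cols c).

Lemma free_cells_push k cols j x : j < size k ->
  free_cells k (push cols j x) + free_cells_col k j (col cols j) =
  free_cells k cols + free_cells_col k j (rcons (col cols j) x).
Proof.
move=> lt_j; rewrite /free_cells (bigD1 (Ordinal lt_j)) //= [in RHS](bigD1 (Ordinal lt_j)) //=.
rewrite col_push eqxx (eq_bigr (fun c : 'I_(size k) => free_cells_col k c (col cols c))); first lia.
by move=> c; rewrite col_push -val_eqE /= => /negPf->.
Qed.

Section Filling.

Variables (k : seq nat) (D : seq int).
Hypothesis Dk : in_Dk k D.

Record fill_inv m cols : Prop := {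
  fill_size : size cols = size k;
  fill_nonempty : forall c, (0 < size (col cols c)) = (c < up_count D m);
  fill_range : forall c t, t \in col cols c -> 0 < t <= m;
  fill_placed : forall t, 0 < t <= m -> exists c, t \in col cols c;
  fill_disjoint : forall c c' t, t \in col cols c -> t \in col cols c' -> c = c';
  fill_uniq : forall c, uniq (col cols c);
  fill_free : Posz (free_cells k cols) = (\sum_(x <- take m D) x)%R;
  fill_top : forall c, 0 < c -> 0 < size (col cols c) ->
    exists2 c', c' < c & (head 0 (col cols c)).-1 \in col cols c' }.

Lemma fill_inv0 : fill_inv 0 (nseq (size k) [::]).
Proof.
have col0 c : col (nseq (size k) [::]) c = [::] by rewrite /col nth_nseq if_same.
split=> [|c|c t|t|c c' t|c||c]; rewrite ?col0 ?size_nseq /up_count ?take0 //; first lia.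
by rewrite big_nil /free_cells big1 // => c _; rewrite col0.
Qed.

Lemma fill_inv_push m cols j : fill_inv m cols -> j < size k ->
  (col cols j = [::] -> 0 < j -> 0 < m) ->
  (forall c, (0 < size (col (push cols j m.+1) c)) = (c < up_count D m.+1)) ->
  Posz (free_cells k (push cols j m.+1)) = (\sum_(x <- take m.+1 D) x)%R ->
  fill_inv m.+1 (push cols j m.+1).
Proof.
move=> inv lt_j opens nonempty free.
have fresh c : m.+1 \notin col cols c by apply/negP => /(fill_range inv); lia.
have mem_push c t : (t \in col (push cols j m.+1) c) =
    (t \in col cols c) || (c == j) && (t == m.+1).
  rewrite col_push; case: eqP => [->|_]; last by rewrite orbF.
  by rewrite mem_rcons inE orbC.
split=> //.
- by rewrite size_push (fill_size inv).
- move=> c t; rewrite mem_push => /orP[/(fill_range inv)|/andP[_ /eqP->]]; lia.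
- move=> t t_range; case: (ltnP m t) => [lt_mt|le_tm].
    by exists j; rewrite mem_push eqxx; apply/orP; right; apply/eqP; lia.
  have [c t_c] := fill_placed inv (ltac:(lia) : 0 < t <= m).
  by exists c; rewrite mem_push t_c.
- move=> c c' t; rewrite !mem_push.
  case/orP=> [t_c|/andP[/eqP-> /eqP t_new]]; case/orP=> [t_c'|/andP[/eqP-> /eqP t_new']] //.
  + exact: fill_disjoint inv _ _ _ t_c t_c'.
  + by move: (fresh c); rewrite -t_new' t_c.
  + by move: (fresh c'); rewrite -t_new t_c'.
- by move=> c; rewrite col_push; case: eqP => _; rewrite ?rcons_uniq ?fresh (fill_uniq inv).
move=> c c_gt0; rewrite col_push; case: eqP => [e_cj|ne_cj] ne_c.
  subst c; case col_j: (col cols j) => [|y s] /=.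
    have m_gt0 := opens col_j c_gt0.
    have [c' m_c'] := fill_placed inv (ltac:(lia) : 0 < m <= m).
    have c'_open : c' < up_count D m.
      by rewrite -(fill_nonempty inv); case: (col cols c') m_c'.
    have j_closed : up_count D m <= j by rewrite leqNgt -(fill_nonempty inv) col_j.
    by exists c'; [lia | rewrite mem_push m_c'].
  have [c' lt_c'j top_c'] := fill_top inv c_gt0 (ltac:(by rewrite col_j) : 0 < size (col cols j)).
  by rewrite col_j in top_c'; exists c'; rewrite // mem_push top_c'.
have [c' lt_c'c top_c'] := fill_top inv c_gt0 ne_c.
by exists c'; rewrite // mem_push top_c'.
Qed.

Lemma fill_step_up m cols : fill_inv m cols -> m < size D -> (0 < nth 0%R D m)%R ->
  col cols (up_count D m) = [::] /\
  fill_step k cols (m.+1, S) = push cols (up_count D m) m.+1.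
Proof.
move=> inv lt_m pos_m; have [lt_up _] := Dk_up_entry Dk lt_m pos_m.
have col_up : col cols (up_count D m) = [::].
  by apply: size0nil; apply/eqP; rewrite -leqn0 leqNgt (fill_nonempty inv) ltnn.
split=> //; rewrite /= (@find_eq_nth _ _ _ [::] (up_count D m)) ?(fill_size inv) //.
- by rewrite lt_up /push col_up.
- by rewrite -/(col cols (up_count D m)) col_up.
- by move=> c lt_c; rewrite -/(col cols c) /nilp -lt0n (fill_nonempty inv).
Qed.

Lemma free_cells_active cols :
  0 < free_cells k cols -> has (active k cols) (iota 0 (size k)).
Proof.
apply: contraLR => /hasPn inactive; rewrite -leqNgt leqn0 /free_cells; apply/eqP/big1 => c _.
have := inactive c; rewrite mem_iota ltn_ord /active /free_cells_col => /(_ isT).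
by case: ifP => //= _; rewrite -leqNgt -subn_eq0 => /eqP.
Qed.

Lemma fill_step_down m cols : fill_inv m cols -> m < size D -> (nth 0%R D m < 0)%R ->
  exists j, [/\ j < size k, active k cols j,
    forall j', active k cols j' -> lowest cols j <= lowest cols j'
    & fill_step k cols (m.+1, W) = push cols j m.+1].
Proof.
move=> inv lt_m neg_m.
have free_gt0 : 0 < free_cells k cols.
  have := Dk_prefix_sum_ge0 Dk lt_m.
  by rewrite (take_nth 0%R) // -cats1 big_cat big_seq1 /= (Dk_down Dk lt_m neg_m) -(fill_free inv); lia.
have active_lt j : active k cols j -> j < size k.
  move=> /andP[ne_j _]; rewrite -(fill_size inv) ltnNge; apply: contraTN ne_j => le_j.
  by rewrite /col nth_default.
rewrite /=; have := argmin_colP (lowest cols) [seq j <- iota 0 (size k) | active k cols j].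
case: argmin_col => [j [/= j_act j_min]|/= no_active]; last first.
  by move: (free_cells_active free_gt0); rewrite has_filter no_active.
move: j_act; rewrite mem_filter mem_iota /= => /andP[j_act lt_j].
exists j; split=> // j' j'_act; apply: j_min.
by rewrite mem_filter j'_act mem_iota /= active_lt.
Qed.

Lemma fill_inv_step m cols : fill_inv m cols -> m < size D ->
  fill_inv m.+1 (fill_step k cols (m.+1, letter_of (nth 0%R D m))).
Proof.
move=> inv lt_m; have take_m1 := take_nth 0%R lt_m; rewrite -cats1 in take_m1.
have sum_m1 : (\sum_(x <- take m.+1 D) x = \sum_(x <- take m D) x + nth 0%R D m)%R.
  by rewrite take_m1 big_cat big_seq1.
rewrite /letter_of; case: ifP => [neg_m|/negbT nneg_m].
  have [j [lt_j j_act _ ->]] := fill_step_down inv lt_m neg_m.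
  have up_m1 : up_count D m.+1 = up_count D m.
    by rewrite /up_count take_m1 count_cat /= (Dk_down Dk lt_m neg_m) ltr0N1 !addn0.
  move: (j_act) => /andP[ne_j notfull_j].
  apply: fill_inv_push => //.
  - by move=> col_j; move: ne_j; rewrite col_j.
  - move=> c; rewrite col_push up_m1; case: eqP => [->|_]; last exact: fill_nonempty inv c.
    by rewrite size_rcons -(fill_nonempty inv) ne_j.
  - have := free_cells_push cols m.+1 lt_j; rewrite /free_cells_col size_rcons ne_j /=.
    by rewrite sum_m1 (Dk_down Dk lt_m neg_m) -(fill_free inv); lia.
have pos_m := Dk_up Dk lt_m nneg_m.
have [col_up ->] := fill_step_up inv lt_m pos_m.
have [lt_up val_m] := Dk_up_entry Dk lt_m pos_m.
have up_m1 : up_count D m.+1 = (up_count D m).+1.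
  by rewrite /up_count take_m1 count_cat /= pos_m addn1.
apply: fill_inv_push => //.
- by move=> _; case: (posnP m) => [->|//]; rewrite /up_count take0.
- move=> c; rewrite col_push up_m1; case: eqP => [->|/eqP ne_c]; first by rewrite size_rcons ltnSn.
  by rewrite (fill_nonempty inv); lia.
- have := free_cells_push cols m.+1 lt_up; rewrite /free_cells_col col_up /=.
  by rewrite sum_m1 val_m -(fill_free inv); lia.
Qed.

Lemma fill_prefix_inv m : m <= size D -> fill_inv m (fill_prefix k D m).
Proof.
elim: m => [|m IHm] le_m; first by rewrite fill_prefix0; apply: fill_inv0.
by rewrite fill_prefixS //; apply: fill_inv_step => //; apply: IHm; lia.
Qed.

Lemma fill_prefix_up m : m < size D -> (0 < nth 0%R D m)%R ->
  col (fill_prefix k D m) (up_count D m) = [::] /\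
  fill_prefix k D m.+1 = push (fill_prefix k D m) (up_count D m) m.+1.
Proof.
move=> lt_m pos_m; rewrite fill_prefixS // /letter_of ltNge (ltW pos_m) /=.
exact: fill_step_up (fill_prefix_inv (ltnW lt_m)) lt_m pos_m.
Qed.

Lemma fill_prefix_down m : m < size D -> (nth 0%R D m < 0)%R ->
  exists j, [/\ j < size k, active k (fill_prefix k D m) j,
    forall j', active k (fill_prefix k D m) j' ->
      lowest (fill_prefix k D m) j <= lowest (fill_prefix k D m) j'
    & fill_prefix k D m.+1 = push (fill_prefix k D m) j m.+1].
Proof.
move=> lt_m neg_m; have inv := fill_prefix_inv (ltnW lt_m).
have [j [lt_j j_act j_min step]] := fill_step_down inv lt_m neg_m.
by exists j; rewrite fill_prefixS // /letter_of neg_m step.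
Qed.

Lemma fill_lowest_range m cols : fill_inv m cols ->
  forall j, active k cols j -> 0 < lowest cols j <= m.
Proof. by move=> inv j /andP[ne_j _]; apply: (fill_range inv); apply: mem_lowest. Qed.

Lemma fill_up_count_gt0 m cols : fill_inv m cols -> 0 < m -> 0 < up_count D m.
Proof.
move=> inv m_gt0; have [c m_c] := fill_placed inv (ltac:(lia) : 0 < m <= m).
have : 0 < size (col cols c) by case: (col cols c) m_c.
by rewrite (fill_nonempty inv); lia.
Qed.

Lemma fillT_inv : fill_inv (size D) (fillT k D).
Proof. by rewrite -fill_prefix_size; apply: fill_prefix_inv. Qed.

End Filling.

Section Ranking.

Variable T : seq (seq nat).

Lemma foldl_rank_step_notin s rk t : (forall c, c \in s -> t \notin col T c) ->
  foldl (rank_step T) rk s t = rk t.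
Proof.
elim: s rk => //= c s IHs rk notin_s; rewrite IHs => [|c' s_c']; last first.
  by apply: notin_s; rewrite inE s_c' orbT.
by rewrite /rank_step (negPf (notin_s c _)) // mem_head.
Qed.

Hypothesis T_disjoint : forall c c' t, t \in col T c -> t \in col T c' -> c = c'.
Hypothesis T_uniq : forall c, uniq (col T c).
Hypothesis T_top : forall c, 0 < c -> 0 < size (col T c) ->
  exists2 c', c' < c & (head 0 (col T c)).-1 \in col T c'.

Lemma rank_ofE c p : c < size T -> p < size (col T c) ->
  rank_of T (nth 0 (col T c) p) =
    (if c == 0 then 0 else rank_of T (head 0 (col T c)).-1) + p.
Proof.
move=> lt_c lt_p; set rk_c := foldl (rank_step T) (fun _ => 0) (iota 0 c).
have rank_split : rank_of T =
    foldl (rank_step T) (rank_step T rk_c c) (iota c.+1 (size T - c.+1)).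
  rewrite /rank_of {1}(_ : size T = c + (size T - c.+1).+1); last lia.
  by rewrite iotaD foldl_cat add0n.
have later_notin t c' : t \in col T c' -> c' <= c ->
    forall c2, c2 \in iota c.+1 (size T - c.+1) -> t \notin col T c2.
  move=> t_c' le_c' c2; rewrite mem_iota => /andP[lt_c2 _].
  by apply/negP => /(T_disjoint t_c'); lia.
have t_c := mem_nth 0 lt_p.
rewrite {1}rank_split foldl_rank_step_notin; last exact: later_notin t_c _.
rewrite {1}/rank_step t_c index_uniq //; congr (_ + _).
case: posnP => // c_gt0; have [c' lt_c' top_c'] := T_top c_gt0 (leq_ltn_trans (leq0n p) lt_p).
rewrite rank_split foldl_rank_step_notin; last exact: later_notin top_c' (ltnW lt_c').
rewrite /rank_step; case: ifP => // top_c; have := T_disjoint top_c' top_c; lia.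
Qed.

Lemma rank_of_top c x s : c < size T -> col T c = x :: s ->
  rank_of T x = if c == 0 then 0 else rank_of T x.-1.
Proof.
by move=> lt_c col_c; have := rank_ofE (p := 0) lt_c; rewrite col_c addn0; apply.
Qed.

Lemma rank_of_next c s1 x y s2 : c < size T -> col T c = s1 ++ x :: y :: s2 ->
  rank_of T y = (rank_of T x).+1.
Proof.
move=> lt_c col_c; have size_c : (size s1).+1 < size (col T c) by rewrite col_c size_cat /=; lia.
have := rank_ofE lt_c size_c; have := rank_ofE lt_c (ltnW size_c).
by rewrite col_c !nth_cat ltnn subnn ltnNge leqnSn subSnn /= => -> ->; rewrite addnS.
Qed.

End Ranking.

Section RankInvariant.

Variables (k : seq nat) (R : nat -> nat).

Record rank_inv m cols : Prop := {
  rank_active : forall j, active k cols j ->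
    R (lowest cols j) <= R m <= (R (lowest cols j)).+1;
  rank_lowest_mono : forall j j', active k cols j -> active k cols j' ->
    lowest cols j <= lowest cols j' -> R (lowest cols j) <= R (lowest cols j');
  rank_steps : forall i, 1 < i <= m -> R i = R i.-1 \/ R i = (R i.-1).+1 }.

Lemma rank_inv0 : rank_inv 0 (nseq (size k) [::]).
Proof.
have inactive j : active k (nseq (size k) [::]) j = false.
  by rewrite /active /col nth_nseq if_same.
by split=> [j|j j'|i]; rewrite ?inactive //; lia.
Qed.

Section Step.

Variables (m : nat) (cols : seq (seq nat)) (j : nat).
Hypothesis inv : rank_inv m cols.
Hypothesis lowest_range : forall j', active k cols j' -> 0 < lowest cols j' <= m.

Lemma rank_inv_down : active k cols j ->
  (forall j', active k cols j' -> lowest cols j <= lowest cols j') ->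
  R m.+1 = (R (lowest cols j)).+1 -> rank_inv m.+1 (push cols j m.+1).
Proof.
move=> j_act j_min R_m1; have R_j := rank_active inv j_act.
split=> [j'|j1 j2|i i_range]; rewrite ?active_push ?lowest_push.
- case: eqP => [_ _|_ j'_act]; first lia.
  by have := rank_active inv j'_act; have := rank_lowest_mono inv j_act j'_act (j_min _ j'_act); lia.
- case: eqP => [_|_]; case: eqP => [_|_] // j1_act j2_act.
  + by have := lowest_range j2_act; lia.
  + by have := rank_active inv j1_act; lia.
  + exact: rank_lowest_mono inv _ _ j1_act j2_act.
- case: (ltnP m i) => [lt_mi|le_im]; last by apply: (rank_steps inv); lia.
  have -> : i = m.+1 by lia.
  by rewrite /= R_m1; lia.
Qed.

Lemma rank_inv_up : col cols j = [::] -> (0 < m -> R m.+1 = R m) ->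
  rank_inv m.+1 (push cols j m.+1).
Proof.
move=> col_j R_m1.
have R_m1_active j' : active k cols j' -> R m.+1 = R m by move/lowest_range=> ?; apply: R_m1; lia.
split=> [j'|j1 j2|i i_range]; rewrite ?active_push ?lowest_push.
- case: eqP => [_ _|_ j'_act]; first lia.
  by rewrite (R_m1_active _ j'_act); apply: rank_active.
- case: eqP => [_|_]; case: eqP => [_|_] // j1_act j2_act.
  + by have := lowest_range j2_act; lia.
  + by rewrite (R_m1_active _ j1_act); have := rank_active inv j1_act; lia.
  + exact: rank_lowest_mono inv _ _ j1_act j2_act.
- case: (ltnP m i) => [lt_mi|le_im]; last by apply: (rank_steps inv); lia.
  have -> : i = m.+1 by lia.
  by left; apply: R_m1; lia.
Qed.

End Step.

End RankInvariant.

Section FillRanks.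

Variables (k : seq nat) (D : seq int).
Hypothesis Dk : in_Dk k D.

Local Notation T := (fillT k D).
Local Notation R := (rank_of (fillT k D)).
Local Notation cols m := (fill_prefix k D m).

Let T_inv := fillT_inv Dk.

Lemma rank_fillT_top c x s : c < size k -> col T c = x :: s ->
  R x = if c == 0 then 0 else R x.-1.
Proof.
rewrite -(fill_size T_inv).
exact: rank_of_top (fill_disjoint T_inv) (fill_uniq T_inv) (fill_top T_inv) _ _ _.
Qed.

Lemma rank_fillT_next c s1 x y s2 : c < size k -> col T c = s1 ++ x :: y :: s2 ->
  R y = (R x).+1.
Proof.
rewrite -(fill_size T_inv).
exact: rank_of_next (fill_disjoint T_inv) (fill_uniq T_inv) (fill_top T_inv) _ _ _ _ _.
Qed.

Lemma fillT_col_push m j : cols m.+1 = push (cols m) j m.+1 ->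
  exists t, col T j = rcons (col (cols m) j) m.+1 ++ t.
Proof.
by move=> push_m; have [t] := fill_prefix_extends k D m.+1 j; rewrite push_m col_push eqxx; exists t.
Qed.

Lemma rank_fillT_up m : m < size D -> (0 < nth 0%R D m)%R ->
  R m.+1 = if up_count D m == 0 then 0 else R m.
Proof.
move=> lt_m pos_m; have [col_up push_m] := fill_prefix_up Dk lt_m pos_m.
have [lt_up _] := Dk_up_entry Dk lt_m pos_m.
have [t col_T] := fillT_col_push push_m; rewrite col_up /= in col_T.
exact: rank_fillT_top lt_up col_T.
Qed.

Lemma rank_fillT1 : 0 < size D -> R 1 = 0.
Proof.
move=> D_gt0; have := Dk_prefix_sum_ge0 Dk D_gt0.
rewrite (take_nth 0%R) // take0 /= big_seq1 leNgt => /(Dk_up Dk D_gt0) pos_0.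
by rewrite rank_fillT_up // /up_count take0.
Qed.

Lemma rank_inv_fill_prefix m : m <= size D -> rank_inv k R m (cols m).
Proof.
elim: m => [|m IHm] le_m; first by rewrite fill_prefix0; apply: rank_inv0.
have {}IHm := IHm (ltnW le_m); have inv := fill_prefix_inv Dk (ltnW le_m).
have [neg_m|nneg_m] := boolP (nth 0%R D m < 0)%R.
  have [j [lt_j j_act j_min push_m]] := fill_prefix_down Dk le_m neg_m.
  rewrite push_m; apply: rank_inv_down => //; first exact: fill_lowest_range inv.
  have [t] := fillT_col_push push_m.
  move: j_act => /andP[]; rewrite /lowest; case/lastP: (col (cols m) j) => //= s e _ _.
  by rewrite last_rcons -cats1 -catA cat_rcons; apply: rank_fillT_next.
have pos_m := Dk_up Dk le_m nneg_m; have [col_up push_m] := fill_prefix_up Dk le_m pos_m.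
rewrite push_m; apply: rank_inv_up => //; first exact: fill_lowest_range inv.
move=> m_gt0; have up_gt0 := fill_up_count_gt0 inv m_gt0.
by rewrite rank_fillT_up // eqn0Ngt up_gt0.
Qed.

End FillRanks.

Theorem mainTheorem6 (n : nat) (k : seq nat) (D : seq int) :
  (1 <= n)%N -> size k = n -> all (fun x => 0 < x)%N k -> in_Dk k D ->
  let N := (n + sumn k)%N in
  r_ k D 1 = 0%N /\
  (forall i : nat, (2 <= i <= N)%N -> (r_ k D i.-1 <= r_ k D i)%N) /\
  (forall i : nat, (2 <= i <= N)%N ->
     r_ k D i = r_ k D i.-1 \/ r_ k D i = (r_ k D i.-1).+1).
Proof.
move=> n_gt0 size_k _ Dk N.
have size_D : size D = N by case: Dk => -> *; rewrite size_k.
have rank_steps_D := rank_steps (rank_inv_fill_prefix Dk (leqnn (size D))).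
have r_steps i : 2 <= i <= N -> r_ k D i = r_ k D i.-1 \/ r_ k D i = (r_ k D i.-1).+1.
  by rewrite -size_D; apply: rank_steps_D.
split; first by apply: (rank_fillT1 Dk); rewrite size_D /N; lia.
by split=> // i /r_steps; lia.
Qed.
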